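(* There is an absolute constant $c>0$ such that the following holds. Let $v_1,\dots,v_n$ be distinct non-negative integers, $s_1,\dots,s_n\in[0,1)$, and $f(x):=\sum_{i=1}^n e^{2\pi\imath s_i}x^{v_i}$. Then for every $t\in\mathbb{R}$, $$B(s_1+v_1t,\dots,s_n+v_nt)\ \le\ c\Big(1+\sum_{k=1}^n\frac{|f^{(k)}|_m}{k}\Big).$$
   Context: For $r\in\mathbb{R}$, $\{r\}:=r-\lfloor r\rfloor$. The bias is $B(r_1,\dots,r_n):=\sup_{0\le a\le b\le1}\big|\,|\{i:\{r_i\}\in[a,b]\}|-n(b-a)\big|$. For a complex polynomial $g(x)=\sum_i a_ix^i$, $|g|_m:=\max_{|x|=1}|g(x)|$ (maximum over the unit circle), and for a positive integer $k$, the Hadamard power is $g^{(k)}(x):=\sum_i a_i^kx^i$. *)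

From Stdlib Require Import Reals.
Open Scope R_scope.

Fixpoint rsum (n : nat) (F : nat -> R) : R :=
  match n with
  | O => 0
  | S m => rsum m F + F m
  end.

(* {r} = r - floor r  (Stdlib: frac_part r = r - IZR (Int_part r), Int_part = floor) *)
Definition fracR (r : R) : R := frac_part r.

Fixpoint count_in (n : nat) (r : nat -> R) (a b : R) : nat :=
  match n with
  | O => O
  | S m => (count_in m r a b +
            (if Rle_dec a (fracR (r m)) then
               if Rle_dec (fracR (r m)) b then 1 else 0
             else 0))%nat
  end.

(* The set whose supremum is the bias B(r_0,...,r_{n-1}). *)
Definition bias_set (n : nat) (r : nat -> R) : R -> Prop :=
  fun x => exists a b : R, 0 <= a /\ a <= b /\ b <= 1 /\
    x = Rabs (INR (count_in n r a b) - INR n * (b - a)).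

(* Modulus of f^(k)(x) at x = e^{2 pi i theta}, where
   f(x) = sum_{i<n} e^{2 pi i s_i} x^{v_i}, so
   f^(k)(x) = sum_{i<n} e^{2 pi i k s_i} x^{v_i}
   and f^(k)(e^{2 pi i theta}) = sum_i e^{2 pi i (k s_i + v_i theta)}. *)
Definition hadamard_mod (n : nat) (v : nat -> nat) (s : nat -> R) (k : nat)
  (theta : R) : R :=
  sqrt ( (rsum n (fun i => cos (2 * PI * (INR k * s i + INR (v i) * theta)))) ^ 2
       + (rsum n (fun i => sin (2 * PI * (INR k * s i + INR (v i) * theta)))) ^ 2 ).

(* The set of values |f^(k)(x)|, |x| = 1; its supremum (= maximum) is |f^(k)|_m. *)
Definition hadamard_mod_set (n : nat) (v : nat -> nat) (s : nat -> R) (k : nat)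
  : R -> Prop :=
  fun y => exists theta : R, y = hadamard_mod n v s k theta.

From Stdlib Require Import Reals Lra Lia Arith ZArith.
From Coquelicot Require Import Coquelicot.
Open Scope R_scope.

(* Put y_i := {s_i + v_i t}.  We round the y_i to the grid (1/L) Z / Z with
   L := 16 (n^2 + 1), writing u_i := floor (L y_i), and study the grid
   discrepancy  Psi m := #{i | u_i < m} - n m / L  for m = 0..L.  The bias is
   at most the oscillation max Psi - min Psi plus rounding errors.

   The oscillation is controlled by the Erdős–Turán argument on Z/LZ:
   - the Fejér kernel F_K, sampled on the grid, has total mass L and is
     concentrated near 0;
   - the discrete Fourier coefficients of Psi are (up to a factor of size
     L/|d|) the exponential sums W d = |sum_i e(u_i d / L)|, so smoothing
     Psi by F_K changes its sum by at most (L/2) sum_{k<=K} W k / k;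
   - Psi decreases at rate at most n/L, so a large peak (or pit) of Psi
     persists on a window of width h, and smoothing with the Fejér kernel
     centred at that window detects it; optimizing h gives
     osc Psi <= 2 + 2 sum_{k<=n} W k / k + 70 sqrt n.
   Finally W k differs from |f^(k)(e(kt))| by at most 2 pi k n / L, and
   sqrt n <= |f|_m by Parseval on a fine grid, which absorbs the sqrt n.
   Here e(x) := e^{2 pi i x}. *)

Lemma rsum_ext n f g : (forall i, (i < n)%nat -> f i = g i) -> rsum n f = rsum n g.
Proof.
  induction n; intros H; simpl; auto.
  rewrite IHn by (intros; apply H; lia). rewrite H by lia. auto.
Qed.

Lemma rsum_le n f g : (forall i, (i < n)%nat -> f i <= g i) -> rsum n f <= rsum n g.
Proof.
  induction n; intros H; simpl; [lra|].
  assert (H1 := H n (Nat.lt_succ_diag_r n)).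
  assert (rsum n f <= rsum n g) by (apply IHn; intros; apply H; lia). lra.
Qed.

Lemma rsum_plus n f g : rsum n (fun i => f i + g i) = rsum n f + rsum n g.
Proof. induction n; simpl; [lra|]. rewrite IHn. lra. Qed.

Lemma rsum_minus n f g : rsum n (fun i => f i - g i) = rsum n f - rsum n g.
Proof. induction n; simpl; [lra|]. rewrite IHn. lra. Qed.

Lemma rsum_scal n c f : c * rsum n f = rsum n (fun i => c * f i).
Proof. induction n; simpl; [lra|]. rewrite <- IHn. lra. Qed.

Lemma rsum_const n c : rsum n (fun _ => c) = INR n * c.
Proof. induction n; simpl rsum; [simpl; lra|]. rewrite IHn, S_INR. lra. Qed.

Lemma rsum_abs n f : Rabs (rsum n f) <= rsum n (fun i => Rabs (f i)).
Proof.
  induction n; simpl; [rewrite Rabs_R0; lra|].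
  eapply Rle_trans; [apply Rabs_triang | lra].
Qed.

Lemma rsum_nonneg n f : (forall i, (i < n)%nat -> 0 <= f i) -> 0 <= rsum n f.
Proof.
  intros H. replace 0 with (rsum n (fun _ => 0)) by (rewrite rsum_const; lra).
  apply rsum_le; auto.
Qed.

Lemma rsum_swap n m f :
  rsum n (fun i => rsum m (fun j => f i j)) = rsum m (fun j => rsum n (fun i => f i j)).
Proof.
  induction n; simpl.
  - induction m; simpl; lra.
  - rewrite IHn, <- rsum_plus. auto.
Qed.

Lemma rsum_mult n m f g :
  rsum n f * rsum m g = rsum n (fun i => rsum m (fun j => f i * g j)).
Proof.
  rewrite Rmult_comm, rsum_scal. apply rsum_ext. intros i _.
  rewrite Rmult_comm, rsum_scal. auto.
Qed.

Lemma rsum_diag n f j : (j < n)%nat ->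
  rsum n f = f j + rsum n (fun l => if Nat.eq_dec l j then 0 else f l).
Proof.
  induction n; intros H; simpl; [lia|].
  destruct (Nat.eq_dec n j).
  - subst. rewrite (rsum_ext j (fun l => if Nat.eq_dec l j then 0 else f l) f); [lra|].
    intros i Hi. destruct (Nat.eq_dec i j); [lia | auto].
  - rewrite IHn by lia. lra.
Qed.

Lemma rsum_shift n f : rsum (S n) f = f 0%nat + rsum n (fun i => f (S i)).
Proof.
  induction n; [simpl; lra|].
  change (rsum (S (S n)) f) with (rsum (S n) f + f (S n)). rewrite IHn. simpl. lra.
Qed.

Lemma rsum_mono_len n m f : (forall i, 0 <= f i) -> (n <= m)%nat -> rsum n f <= rsum m f.
Proof. intros H Hnm. induction Hnm; [lra|]. simpl. specialize (H m). lra. Qed.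

Lemma rsum_trunc n j f : (j <= n)%nat -> (forall i, (j <= i)%nat -> f i = 0) ->
  rsum n f = rsum j f.
Proof. intros H Hf. induction H; auto. simpl. rewrite IHle, Hf by lia. ring. Qed.

Lemma rsum_exists_ge n f c : (0 < n)%nat -> INR n * c <= rsum n f ->
  exists i, (i < n)%nat /\ c <= f i.
Proof.
  induction n; intros Hn H; [lia|].
  destruct (Rle_dec c (f n)); [exists n; split; auto|].
  destruct n; [simpl in H; lra|].
  destruct (IHn ltac:(lia)) as [i [Hi Hc]].
  - change (rsum (S (S n)) f) with (rsum (S n) f + f (S n)) in H. rewrite S_INR in H. lra.
  - exists i; split; auto.
Qed.

Lemma argmax_ex L f : (0 < L)%nat ->
  exists m0, (m0 < L)%nat /\ forall m, (m < L)%nat -> f m <= f m0.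
Proof.
  induction L; intros H; [lia|]. destruct L.
  { exists 0%nat. split; [lia|]. intros m Hm. replace m with 0%nat by lia. lra. }
  destruct (IHL ltac:(lia)) as [m0 [H0 H1]].
  destruct (Rle_dec (f (S L)) (f m0)).
  - exists m0. split; [lia|]. intros m Hm.
    destruct (Nat.eq_dec m (S L)); [subst; auto | apply H1; lia].
  - exists (S L). split; [lia|]. intros m Hm.
    destruct (Nat.eq_dec m (S L)); [subst; lra|]. specialize (H1 m ltac:(lia)). lra.
Qed.

Lemma argmin_ex L f : (0 < L)%nat ->
  exists m0, (m0 < L)%nat /\ forall m, (m < L)%nat -> f m0 <= f m.
Proof.
  intros H. destruct (argmax_ex L (fun m => - f m) H) as [m0 [H0 H1]].
  exists m0. split; auto. intros m Hm. specialize (H1 m Hm). lra.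
Qed.

Lemma nat_floor x : 0 <= x -> exists h : nat, INR h <= x < INR h + 1.
Proof.
  intros Hx. destruct (base_Int_part x) as [H1 H2].
  assert (0 <= Int_part x)%Z.
  { assert (-1 < Int_part x)%Z by (apply lt_IZR; lra). lia. }
  exists (Z.to_nat (Int_part x)). rewrite INR_IZR_INZ, Z2Nat.id by auto. lra.
Qed.

Definition expi (a : R) : C := (cos a, sin a).

Fixpoint csum (n : nat) (f : nat -> C) : C :=
  match n with O => RtoC 0 | S m => Cplus (csum m f) (f m) end.

Lemma ceq (x y : C) : fst x = fst y -> snd x = snd y -> x = y.
Proof. destruct x, y; simpl; intros; subst; auto. Qed.

Lemma expi_add a b : expi (a + b) = Cmult (expi a) (expi b).
Proof. apply ceq; simpl; [rewrite cos_plus | rewrite sin_plus]; ring. Qed.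

Lemma expi_0 : expi 0 = RtoC 1.
Proof. apply ceq; simpl; [rewrite cos_0 | rewrite sin_0]; auto. Qed.

Lemma expi_pow a k : Cpow (expi a) k = expi (INR k * a).
Proof.
  induction k; simpl Cpow.
  - rewrite Rmult_0_l, expi_0. auto.
  - rewrite IHk, <- expi_add, S_INR. f_equal. ring.
Qed.

Lemma expi_neg a : Cmult (expi (- a)) (expi a) = RtoC 1.
Proof. rewrite <- expi_add. replace (-a + a) with 0 by ring. apply expi_0. Qed.

Lemma expi_conj a : Cconj (expi a) = expi (- a).
Proof. apply ceq; simpl; [rewrite cos_neg | rewrite sin_neg]; auto. Qed.

Lemma expi_int k : expi (2 * PI * INR k) = RtoC 1.
Proof.
  replace (2 * PI * INR k) with (0 + 2 * INR k * PI) by ring.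
  apply ceq; simpl; [rewrite cos_period, cos_0 | rewrite sin_period, sin_0]; auto.
Qed.

Lemma expi_intZ z : expi (2 * PI * IZR z) = RtoC 1.
Proof.
  destruct (Z_le_gt_dec 0 z).
  - rewrite <- (Z2Nat.id z), <- INR_IZR_INZ by auto. apply expi_int.
  - replace z with (- Z.of_nat (Z.to_nat (- z)))%Z by lia.
    rewrite opp_IZR, <- INR_IZR_INZ, <- (Cmult_1_r (expi _)).
    rewrite <- (expi_int (Z.to_nat (- z))) at 1.
    replace (2 * PI * - INR (Z.to_nat (- z))) with (- (2 * PI * INR (Z.to_nat (- z)))) by ring.
    apply expi_neg.
Qed.

Lemma expi_intdiff j l : expi (2 * PI * (INR j - INR l)) = RtoC 1.
Proof.
  rewrite INR_IZR_INZ, (INR_IZR_INZ l), <- minus_IZR. apply expi_intZ.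
Qed.

Lemma Cmod_sq (x : C) : Cmod x ^ 2 = fst x ^ 2 + snd x ^ 2.
Proof. unfold Cmod. rewrite pow2_sqrt; auto. nra. Qed.

Lemma Cmod_expi a : Cmod (expi a) = 1.
Proof.
  unfold Cmod, expi. cbv [fst snd]. pose proof (sin2_cos2 a). unfold Rsqr in H.
  replace (cos a ^ 2 + sin a ^ 2) with 1 by nra. apply sqrt_1.
Qed.

Lemma Cmod_expi_sub1_sq a : Cmod (Cminus (expi a) (RtoC 1)) ^ 2 = 2 - 2 * cos a.
Proof. rewrite Cmod_sq. simpl. pose proof (sin2_cos2 a). unfold Rsqr in H. nra. Qed.

Lemma Cmult_integral (x y : C) : Cmult x y = RtoC 0 -> x = RtoC 0 \/ y = RtoC 0.
Proof.
  intros H. assert (Cmod x * Cmod y = 0) by (rewrite <- Cmod_mult, H; apply Cmod_0).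
  apply Rmult_integral in H0. destruct H0; [left | right]; apply Cmod_eq_0; auto.
Qed.

Lemma csum_fst n f : fst (csum n f) = rsum n (fun i => fst (f i)).
Proof. induction n; simpl; auto. rewrite IHn; auto. Qed.

Lemma csum_snd n f : snd (csum n f) = rsum n (fun i => snd (f i)).
Proof. induction n; simpl; auto. rewrite IHn; auto. Qed.

Lemma csum_ext n f g : (forall i, (i < n)%nat -> f i = g i) -> csum n f = csum n g.
Proof.
  induction n; intros H; simpl; auto.
  rewrite IHn by (intros; apply H; lia). rewrite H by lia. auto.
Qed.

Lemma Cmod_csum n f : Cmod (csum n f) <= rsum n (fun i => Cmod (f i)).
Proof.
  induction n; simpl; [rewrite Cmod_0; lra|].
  eapply Rle_trans; [apply Cmod_triangle | lra].
Qed.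

Lemma csum_scal n c f : Cmult c (csum n f) = csum n (fun i => Cmult c (f i)).
Proof.
  induction n; simpl; [apply ceq; simpl; ring|].
  rewrite <- IHn. apply ceq; simpl; ring.
Qed.

Lemma csum_plus n f g : csum n (fun i => Cplus (f i) (g i)) = Cplus (csum n f) (csum n g).
Proof.
  induction n; simpl; [apply ceq; simpl; ring|].
  rewrite IHn. apply ceq; simpl; ring.
Qed.

Lemma csum_minus n f g : csum n (fun i => Cminus (f i) (g i)) = Cminus (csum n f) (csum n g).
Proof.
  induction n; simpl; [apply ceq; simpl; ring|].
  rewrite IHn. apply ceq; simpl; ring.
Qed.

Lemma csum_RtoC n f : RtoC (rsum n f) = csum n (fun i => RtoC (f i)).
Proof. induction n; simpl; auto. rewrite <- IHn. apply ceq; simpl; ring. Qed.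

Lemma csum_swap n m f :
  csum n (fun i => csum m (fun j => f i j)) = csum m (fun j => csum n (fun i => f i j)).
Proof.
  induction n; simpl.
  - induction m; simpl; auto. rewrite <- IHm. apply ceq; simpl; ring.
  - rewrite IHn, <- csum_plus. auto.
Qed.

Lemma csum_conj n f : Cconj (csum n f) = csum n (fun i => Cconj (f i)).
Proof.
  induction n; simpl; [apply ceq; simpl; ring|].
  rewrite <- IHn. apply ceq; simpl; ring.
Qed.

Lemma csum_zero n : csum n (fun _ => RtoC 0) = RtoC 0.
Proof. induction n; simpl; auto. rewrite IHn. apply ceq; simpl; ring. Qed.

Lemma Cmod_csum_expi_sq n (a : nat -> R) :
  Cmod (csum n (fun j => expi (a j))) ^ 2
  = rsum n (fun j => rsum n (fun l => cos (a j - a l))).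
Proof.
  rewrite Cmod_sq, csum_fst, csum_snd. simpl.
  rewrite !Rmult_1_r, !rsum_mult, <- rsum_plus. apply rsum_ext. intros j _.
  rewrite <- rsum_plus. apply rsum_ext. intros l _. rewrite cos_minus. ring.
Qed.

Open Scope C_scope.

Lemma geom_sum q n : (q - 1) * csum n (fun m => q ^ m) = q ^ n - 1.
Proof.
  induction n; simpl; [apply ceq; simpl; ring|].
  transitivity ((q - 1) * csum n (fun m => q ^ m) + (q - 1) * q ^ n); [ring|].
  rewrite IHn. ring.
Qed.

Lemma geom_sum_from q n a : (a <= n)%nat ->
  (q - 1) * csum n (fun m => if le_dec a m then q ^ m else 0) = q ^ n - q ^ a.
Proof.
  induction n; intros H.
  { replace a with 0%nat by lia. simpl. apply ceq; simpl; ring. }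
  destruct (Nat.eq_dec a (S n)).
  - subst. rewrite (csum_ext _ _ (fun _ => RtoC 0)), csum_zero; [ring|].
    intros i Hi. destruct (le_dec (S n) i); [lia | auto].
  - simpl csum.
    transitivity ((q - 1) * csum n (fun m => if le_dec a m then q ^ m else 0)
                  + (q - 1) * (if le_dec a n then q ^ n else 0)); [ring|].
    rewrite IHn by lia. destruct (le_dec a n); [simpl; ring | lia].
Qed.

Lemma geom_sum_ramp q n :
  (q - 1) * (q - 1) * csum n (fun m => RtoC (INR m) * q ^ m)
  = RtoC (INR n) * q ^ (S n) - RtoC (INR n) * q ^ n - q ^ (S n) + q.
Proof.
  induction n; [simpl; apply ceq; simpl; ring|].
  simpl csum.
  transitivity ((q - 1) * (q - 1) * csum n (fun m => RtoC (INR m) * q ^ m)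
                + (q - 1) * (q - 1) * (RtoC (INR n) * q ^ n)); [ring|].
  rewrite IHn, S_INR. simpl Cpow.
  replace (RtoC (INR n + 1)) with (RtoC (INR n) + 1) by (apply ceq; simpl; ring). ring.
Qed.

Lemma root_of_unity_sum (q : C) L : q ^ L = 1 -> q <> 1 -> csum L (fun m => q ^ m) = 0.
Proof.
  intros H1 H2. assert (E := geom_sum q L). rewrite H1 in E.
  replace (1 - 1) with (RtoC 0) in E by (apply ceq; simpl; ring).
  apply Cmult_integral in E. destruct E as [E | E]; auto. exfalso. apply H2.
  replace q with (q - 1 + 1) by ring. rewrite E. ring.
Qed.

Close Scope C_scope.

Lemma PI_gt3 : 3 < PI.
Proof. pose proof PI2_3_2. lra. Qed.

Lemma sin_sq_le y : sin y ^ 2 <= y ^ 2.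
Proof.
  assert (Hpos : forall x, 0 < x -> - x <= sin x <= x).
  { intros x Hx. split; [|pose proof (sin_lt_x x Hx); lra].
    destruct (Rle_dec 1 x); [pose proof (SIN_bound x); lra|].
    assert (0 < sin x) by (apply sin_gt_0; pose proof PI_gt3; lra). lra. }
  destruct (Rtotal_order y 0) as [H | [H | H]].
  - pose proof (Hpos (- y) ltac:(lra)). rewrite sin_neg in H0. nra.
  - subst. rewrite sin_0. lra.
  - pose proof (Hpos y H). nra.
Qed.

Lemma cos_ge_quadratic t : 1 - t ^ 2 / 2 <= cos t.
Proof.
  replace (cos t) with (1 - 2 * sin (t / 2) * sin (t / 2))
    by (rewrite <- cos_2a_sin; f_equal; field).
  pose proof (sin_sq_le (t / 2)). nra.
Qed.

Lemma one_sub_cos_ge t : Rabs t <= PI / 2 -> t ^ 2 / 2 <= 2 - 2 * cos t.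
Proof.
  intros H. apply Rabs_le_between in H. pose proof PI_4.
  destruct (cos_bound t 0 ltac:(lra) ltac:(lra)) as [_ Hc].
  unfold cos_approx, cos_term in Hc. simpl in Hc. unfold INR in Hc. simpl in Hc.
  assert (t ^ 2 <= 4) by nra. nra.
Qed.

Lemma Cmod_expi_sub_le a b : Cmod (Cminus (expi a) (expi b)) <= Rabs (a - b).
Proof.
  assert (E : Cminus (expi a) (expi b) = Cmult (expi b) (Cminus (expi (a - b)) (RtoC 1))).
  { replace a with ((a - b) + b) at 1 by ring. rewrite expi_add. apply ceq; simpl; ring. }
  rewrite E, Cmod_mult, Cmod_expi, Rmult_1_l.
  apply Rsqr_incr_0_var; [|apply Rabs_pos]. rewrite !Rsqr_pow2, pow2_abs.
  rewrite Cmod_expi_sub1_sq. pose proof (cos_ge_quadratic (a - b)). lra.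
Qed.

Lemma cos_le_window t y : 0 <= t -> t <= PI -> t <= y -> y <= 2 * PI - t -> cos y <= cos t.
Proof.
  intros H1 H2 H3 H4. destruct (Rle_dec y PI).
  - destruct (Req_dec t y); [subst; lra|]. left. apply cos_decreasing_1; lra.
  - replace (cos y) with (cos (2 * PI - y)).
    + destruct (Req_dec t (2 * PI - y)); [rewrite <- H; lra|].
      left. apply cos_decreasing_1; lra.
    + replace (2 * PI - y) with (- y + 2 * INR 1 * PI) by (simpl; ring).
      rewrite cos_period, cos_neg. auto.
Qed.

Definition dirichlet (K : nat) (th : R) : C := csum (S K) (fun j => expi (INR j * th)).

Definition fejer (K : nat) (th : R) : R := Cmod (dirichlet K th) ^ 2 / INR (S K).

Lemma fejer_nonneg K th : 0 <= fejer K th.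
Proof. unfold fejer. apply Rdiv_le_0_compat; [apply pow2_ge_0 | apply lt_0_INR; lia]. Qed.

Lemma fejer_double_sum K th :
  INR (S K) * fejer K th
  = rsum (S K) (fun j => rsum (S K) (fun l => cos ((INR j - INR l) * th))).
Proof.
  unfold fejer. field_simplify; [|apply not_0_INR; lia].
  unfold dirichlet. rewrite Cmod_csum_expi_sq.
  apply rsum_ext; intros; apply rsum_ext; intros. f_equal. ring.
Qed.

(* Concentration: away from th = 0 the kernel is small, (2 - 2 cos th) F_K(th) <= 4/(K+1),
   since (e^{i th} - 1) D_K(th) = e^{i (K+1) th} - 1. *)
Lemma fejer_concentration K th : (2 - 2 * cos th) * fejer K th <= 4 / INR (S K).
Proof.
  unfold fejer. assert (HK : 0 < INR (S K)) by (apply lt_0_INR; lia).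
  rewrite <- Cmod_expi_sub1_sq. unfold Rdiv. rewrite <- Rmult_assoc.
  apply Rmult_le_compat_r; [left; apply Rinv_0_lt_compat; auto|].
  replace (Cmod (Cminus (expi th) (RtoC 1)) ^ 2 * Cmod (dirichlet K th) ^ 2)
    with (Cmod (Cmult (Cminus (expi th) (RtoC 1)) (dirichlet K th)) ^ 2)
    by (rewrite Cmod_mult; ring).
  unfold dirichlet. rewrite (csum_ext _ _ (fun j => Cpow (expi th) j))
    by (intros; symmetry; apply expi_pow).
  rewrite geom_sum.
  assert (Cmod (Cminus (Cpow (expi th) (S K)) (RtoC 1)) <= 2).
  { unfold Cminus. eapply Rle_trans; [apply Cmod_triangle|].
    rewrite Cmod_opp, Cmod_pow, Cmod_expi, pow1, Cmod_1. lra. }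
  pose proof (Cmod_ge_0 (Cminus (Cpow (expi th) (S K)) (RtoC 1))). nra.
Qed.

(* The grid Z/LZ: the point m sits at angle 2 pi (m - z) / L relative to a centre z,
   and the frequency d acts through the root of unity e^{2 pi i d / L}. *)

Definition grid_angle (L : nat) (z : R) (m : nat) : R := 2 * PI * (INR m - z) / INR L.

Definition grid_root (L : nat) (d : R) : C := expi (2 * PI * d / INR L).

Lemma grid_root_pow L j l : (L <> 0)%nat ->
  Cpow (grid_root L (INR j - INR l)) L = RtoC 1.
Proof.
  intros H. unfold grid_root. rewrite expi_pow, <- (expi_intdiff j l). f_equal.
  field. apply not_0_INR; auto.
Qed.

Lemma grid_root_sub1_ge L d : (0 < L)%nat -> 4 * Rabs d <= INR L ->
  4 * Rabs d / INR L <= Cmod (Cminus (grid_root L d) (RtoC 1)).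
Proof.
  intros HL Hd. assert (HL' : 0 < INR L) by (apply lt_0_INR; auto).
  pose proof PI_gt3. pose proof (Rabs_pos d).
  assert (Hx : 0 <= Rabs d / INR L <= 1 / 4).
  { split; [apply Rdiv_le_0_compat; lra|].
    apply (Rmult_le_reg_r (INR L)); auto. field_simplify; lra. }
  apply Rsqr_incr_0_var; [|apply Cmod_ge_0].
  rewrite !Rsqr_pow2. unfold grid_root.
  replace (2 * PI * d / INR L) with (2 * PI * (d / INR L)) by (field; lra).
  rewrite Cmod_expi_sub1_sq.
  assert (Ea : Rabs (2 * PI * (d / INR L)) = 2 * PI * (Rabs d / INR L)).
  { unfold Rdiv. rewrite !Rabs_mult, Rabs_inv, (Rabs_right 2), (Rabs_right PI), (Rabs_right (INR L)); lra. }
  eapply Rle_trans; [|apply one_sub_cos_ge; rewrite Ea; nra].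
  rewrite <- (pow2_abs (2 * PI * (d / INR L))), Ea.
  replace (4 * Rabs d / INR L) with (4 * (Rabs d / INR L)) by (field; lra).
  assert (PI * PI >= 9) by nra. nra.
Qed.

Lemma grid_root_sub1_pos L j l : (0 < L)%nat -> j <> l ->
  4 * Rabs (INR j - INR l) <= INR L ->
  0 < Cmod (Cminus (grid_root L (INR j - INR l)) (RtoC 1)).
Proof.
  intros HL Hjl Hd. eapply Rlt_le_trans; [|apply grid_root_sub1_ge; auto].
  apply Rdiv_lt_0_compat; [|apply lt_0_INR; auto].
  assert (INR j <> INR l) by (intro E; apply INR_eq in E; auto).
  assert (0 < Rabs (INR j - INR l)) by (apply Rabs_pos_lt; lra). lra.
Qed.

Lemma grid_root_ne1 L j l : (0 < L)%nat -> j <> l -> 4 * Rabs (INR j - INR l) <= INR L ->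
  grid_root L (INR j - INR l) <> RtoC 1.
Proof.
  intros HL Hjl Hd E. pose proof (grid_root_sub1_pos L j l HL Hjl Hd) as H.
  rewrite E in H. replace (Cminus (RtoC 1) (RtoC 1)) with (RtoC 0) in H
    by (apply ceq; simpl; ring).
  rewrite Cmod_0 in H. lra.
Qed.

Lemma grid_cos_orth L j l c : (0 < L)%nat -> j <> l -> 4 * Rabs (INR j - INR l) <= INR L ->
  rsum L (fun m => cos (c + (INR j - INR l) * (2 * PI * INR m / INR L))) = 0.
Proof.
  intros HL Hjl Hd. set (q := grid_root L (INR j - INR l)).
  assert (E : rsum L (fun m => cos (c + (INR j - INR l) * (2 * PI * INR m / INR L)))
              = fst (Cmult (expi c) (csum L (fun m => Cpow q m)))).
  { rewrite csum_scal, csum_fst. apply rsum_ext. intros m _.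
    unfold q, grid_root. rewrite expi_pow, <- expi_add. simpl. f_equal. f_equal. field.
    apply not_0_INR; lia. }
  rewrite E, root_of_unity_sum.
  - simpl. ring.
  - apply grid_root_pow. lia.
  - apply grid_root_ne1; auto.
Qed.

Lemma cos_sum_le_dft L d z (phi : nat -> R) :
  Rabs (rsum L (fun m => cos (d * grid_angle L z m) * phi m))
  <= Cmod (csum L (fun m => Cmult (Cpow (grid_root L d) m) (RtoC (phi m)))).
Proof.
  assert (E : rsum L (fun m => cos (d * grid_angle L z m) * phi m)
    = fst (Cmult (expi (- (2 * PI * d * z / INR L)))
                 (csum L (fun m => Cmult (Cpow (grid_root L d) m) (RtoC (phi m)))))).
  { rewrite csum_scal, csum_fst. apply rsum_ext. intros m _.
    unfold grid_root. rewrite Cmult_assoc, expi_pow, <- expi_add. simpl.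
    rewrite Rmult_0_r, Rminus_0_r. f_equal. f_equal. unfold grid_angle, Rdiv. ring. }
  rewrite E. eapply Rle_trans; [apply re_le_Cmod|].
  rewrite Cmod_mult, Cmod_expi. lra.
Qed.

Definition count_below (N : nat) (u : nat -> nat) (m : nat) : R :=
  rsum N (fun i => if lt_dec (u i) m then 1 else 0).

Definition Psi (N L : nat) (u : nat -> nat) (m : nat) : R :=
  count_below N u m - INR N * INR m / INR L.

Definition grid_exp_sum (N L : nat) (u : nat -> nat) (d : R) : R :=
  Cmod (csum N (fun i => expi (INR (u i) * (2 * PI * d / INR L)))).

Lemma grid_exp_sum_opp N L u d : grid_exp_sum N L u (- d) = grid_exp_sum N L u d.
Proof.
  unfold grid_exp_sum. rewrite <- Cmod_conj, csum_conj. f_equal.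
  apply csum_ext. intros i _. rewrite expi_conj. f_equal. unfold Rdiv. ring.
Qed.

Lemma grid_exp_sum_nonneg N L u d : 0 <= grid_exp_sum N L u d.
Proof. apply Cmod_ge_0. Qed.

Open Scope C_scope.

Lemma dft_ramp (q : C) L : q ^ L = 1 -> q <> 1 ->
  (q - 1) * csum L (fun m => RtoC (INR m) * q ^ m) = RtoC (INR L).
Proof.
  intros H1 H2. assert (E := geom_sum_ramp q L). simpl Cpow in E. rewrite H1 in E.
  assert (E' : (q - 1) * ((q - 1) * csum L (fun m => RtoC (INR m) * q ^ m) - RtoC (INR L)) = 0).
  { transitivity ((q - 1) * (q - 1) * csum L (fun m => RtoC (INR m) * q ^ m)
                  - (q - 1) * RtoC (INR L)); [ring|].
    rewrite E. ring. }
  apply Cmult_integral in E'. destruct E' as [E' | E'].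
  - exfalso. apply H2. replace q with (q - 1 + 1) by ring. rewrite E'. ring.
  - replace ((q - 1) * csum L (fun m => RtoC (INR m) * q ^ m))
      with ((q - 1) * csum L (fun m => RtoC (INR m) * q ^ m) - RtoC (INR L) + RtoC (INR L))
      by ring.
    rewrite E'. ring.
Qed.

(* Discrete Fourier coefficient of the counting function: summation by parts turns it
   into the exponential sum of the points. *)
Lemma dft_count N L u (q : C) : (forall i, (i < N)%nat -> (u i < L)%nat) -> q ^ L = 1 ->
  (q - 1) * csum L (fun m => q ^ m * RtoC (count_below N u m))
  = RtoC (INR N) - q * csum N (fun i => q ^ (u i)).
Proof.
  intros Hu H1.
  assert (E : csum L (fun m => q ^ m * RtoC (count_below N u m))
              = csum N (fun i => csum L (fun m => if le_dec (S (u i)) m then q ^ m else 0))).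
  { rewrite <- csum_swap. apply csum_ext. intros m _. unfold count_below.
    rewrite csum_RtoC, csum_scal. apply csum_ext. intros i _.
    destruct (lt_dec (u i) m); destruct (le_dec (S (u i)) m); try lia; apply ceq; simpl; ring. }
  rewrite E, csum_scal, (csum_ext _ _ (fun i => 1 - q * q ^ (u i))).
  - clear. induction N; [apply ceq; simpl; ring|].
    simpl csum. rewrite IHN, S_INR. apply ceq; simpl; ring.
  - intros i Hi. rewrite geom_sum_from, H1 by (apply Hu in Hi; lia). simpl. ring.
Qed.

Lemma dft_Psi N L u (q : C) : (0 < L)%nat -> (forall i, (i < N)%nat -> (u i < L)%nat) ->
  q ^ L = 1 -> q <> 1 ->
  (q - 1) * csum L (fun m => q ^ m * RtoC (Psi N L u m)) = - (q * csum N (fun i => q ^ (u i))).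
Proof.
  intros HL Hu H1 H2. assert (HL' : INR L <> 0%R) by (apply not_0_INR; lia).
  transitivity ((q - 1) * csum L (fun m => q ^ m * RtoC (count_below N u m))
                - RtoC (INR N / INR L) * ((q - 1) * csum L (fun m => RtoC (INR m) * q ^ m))).
  { transitivity ((q - 1) * (csum L (fun m => q ^ m * RtoC (count_below N u m))
                  - RtoC (INR N / INR L) * csum L (fun m => RtoC (INR m) * q ^ m))); [|ring].
    f_equal. rewrite csum_scal, <- csum_minus. apply csum_ext. intros m _.
    unfold Psi. apply ceq; simpl; field; auto. }
  rewrite dft_count, dft_ramp by auto.
  replace (RtoC (INR N / INR L) * RtoC (INR L)) with (RtoC (INR N))
    by (apply ceq; simpl; field; auto).
  ring.
Qed.

Close Scope C_scope.

Lemma Psi_cos_sum_bound N L u z j l : (0 < L)%nat -> j <> l ->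
  4 * Rabs (INR j - INR l) <= INR L -> (forall i, (i < N)%nat -> (u i < L)%nat) ->
  Rabs (rsum L (fun m => cos ((INR j - INR l) * grid_angle L z m) * Psi N L u m))
  <= INR L / 4 * (grid_exp_sum N L u (INR j - INR l) / Rabs (INR j - INR l)).
Proof.
  intros HL Hjl Hd Hu. set (d := INR j - INR l) in *. set (q := grid_root L d).
  assert (HL' : 0 < INR L) by (apply lt_0_INR; auto).
  assert (Hq : 4 * Rabs d / INR L <= Cmod (Cminus q (RtoC 1)))
    by (apply grid_root_sub1_ge; auto).
  assert (Hdpos : 0 < Rabs d).
  { pose proof (grid_root_sub1_pos L j l HL Hjl Hd) as P. unfold d.
    assert (INR j <> INR l) by (intro E; apply INR_eq in E; auto).
    apply Rabs_pos_lt. lra. }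
  set (X := Cmod (csum L (fun m => Cmult (Cpow q m) (RtoC (Psi N L u m))))).
  assert (HX : Cmod (Cminus q (RtoC 1)) * X = grid_exp_sum N L u d).
  { unfold X. rewrite <- Cmod_mult, dft_Psi; auto.
    - rewrite Cmod_opp, Cmod_mult. unfold q at 1, grid_root. rewrite Cmod_expi, Rmult_1_l.
      unfold grid_exp_sum. f_equal. apply csum_ext. intros. unfold q, grid_root. apply expi_pow.
    - apply grid_root_pow. lia.
    - apply grid_root_ne1; auto. }
  eapply Rle_trans; [apply cos_sum_le_dft|]. fold q X.
  assert (0 <= X) by apply Cmod_ge_0.
  assert (4 * Rabs d / INR L * X <= grid_exp_sum N L u d)
    by (rewrite <- HX; apply Rmult_le_compat_r; auto).
  apply (Rmult_le_reg_l (4 * Rabs d / INR L)); [apply Rdiv_lt_0_compat; lra|].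
  replace (4 * Rabs d / INR L * (INR L / 4 * (grid_exp_sum N L u d / Rabs d)))
    with (grid_exp_sum N L u d) by (field; lra).
  lra.
Qed.

Lemma fejer_grid_expand K L z (phi : nat -> R) :
  INR (S K) * rsum L (fun m => fejer K (grid_angle L z m) * phi m)
  = rsum (S K) (fun j => rsum (S K) (fun l =>
      rsum L (fun m => cos ((INR j - INR l) * grid_angle L z m) * phi m))).
Proof.
  rewrite rsum_scal.
  transitivity (rsum L (fun m => rsum (S K) (fun j => rsum (S K) (fun l =>
                  cos ((INR j - INR l) * grid_angle L z m) * phi m)))).
  - apply rsum_ext. intros m _. rewrite <- Rmult_assoc, fejer_double_sum.
    rewrite (Rmult_comm (rsum _ _) (phi m)), rsum_scal. apply rsum_ext. intros j _.
    rewrite rsum_scal. apply rsum_ext. intros l _. ring.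
  - rewrite rsum_swap. apply rsum_ext. intros j _. apply rsum_swap.
Qed.

Lemma small_freq_diff K L j l : (4 * K <= L)%nat -> (j <= K)%nat -> (l <= K)%nat ->
  4 * Rabs (INR j - INR l) <= INR L.
Proof.
  intros HK Hj Hl. apply le_INR in HK, Hj, Hl. rewrite mult_INR in HK. simpl in HK.
  pose proof (pos_INR j). pose proof (pos_INR l).
  destruct (Rle_dec 0 (INR j - INR l));
    [rewrite Rabs_right by lra | rewrite Rabs_left by lra]; lra.
Qed.

Lemma fejer_grid_mass K L z : (0 < L)%nat -> (4 * K <= L)%nat ->
  rsum L (fun m => fejer K (grid_angle L z m)) = INR L.
Proof.
  intros HL HK. assert (HS : 0 < INR (S K)) by (apply lt_0_INR; lia).
  apply (Rmult_eq_reg_l (INR (S K))); [|lra].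
  rewrite (rsum_ext L _ (fun m => fejer K (grid_angle L z m) * 1)) by (intros; ring).
  rewrite fejer_grid_expand, <- rsum_const. apply rsum_ext. intros j Hj.
  rewrite (rsum_diag _ _ j Hj).
  rewrite (rsum_ext L _ (fun _ => 1))
    by (intros; rewrite Rminus_diag, Rmult_0_l, cos_0; ring).
  rewrite (rsum_ext (S K) _ (fun _ => 0)), !rsum_const; [ring|].
  intros l Hl. destruct (Nat.eq_dec l j); auto.
  rewrite (rsum_ext L _ (fun m => cos (- (INR j - INR l) * (2 * PI * z / INR L)
                                      + (INR j - INR l) * (2 * PI * INR m / INR L)))).
  - apply grid_cos_orth; auto. apply small_freq_diff with K; lia.
  - intros m _. rewrite Rmult_1_r. unfold grid_angle. f_equal. field. apply not_0_INR. lia.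
Qed.

Lemma rsum_rev j g : rsum j (fun l => g (j - l)%nat) = rsum j (fun d => g (S d)).
Proof.
  revert g. induction j; intros g; auto.
  change (rsum (S j) (fun l => g (S j - l)%nat))
    with (rsum j (fun l => g (S j - l)%nat) + g (S j - j)%nat).
  replace (S j - j)%nat with 1%nat by lia.
  rewrite (rsum_ext j _ (fun l => g (S (j - l))%nat)) by (intros; f_equal; lia).
  rewrite (IHj (fun x => g (S x))), (rsum_shift j (fun d => g (S d))). lra.
Qed.

Lemma sum_left_of_diag n j (h : nat -> R) : (j <= n)%nat ->
  rsum n (fun l => if lt_dec l j then h (j - l)%nat else 0) = rsum j (fun d => h (S d)).
Proof.
  intros H. rewrite (rsum_trunc n j), <- rsum_rev; auto.
  - apply rsum_ext. intros. destruct (lt_dec i j); auto; lia.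
  - intros. destruct (lt_dec i j); auto; lia.
Qed.

Lemma sum_right_of_diag n j (h : nat -> R) :
  rsum n (fun l => if lt_dec j l then h (l - j)%nat else 0) = rsum (n - S j) (fun e => h (S e)).
Proof.
  induction n; auto. simpl rsum at 1. rewrite IHn. destruct (lt_dec j n).
  - replace (S n - S j)%nat with (S (n - S j)) by lia. simpl. do 2 f_equal. lia.
  - replace (S n - S j)%nat with (n - S j)%nat by lia. ring.
Qed.

Definition toeplitz_entry (h : nat -> R) (j l : nat) : R :=
  (if lt_dec l j then h (j - l)%nat else 0) + (if lt_dec j l then h (l - j)%nat else 0).

Lemma toeplitz_row_bound K j (h : nat -> R) : (j <= K)%nat -> (forall k, 0 <= h k) ->
  rsum (S K) (toeplitz_entry h j) <= 2 * rsum K (fun e => h (S e)).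
Proof.
  intros Hj Hh. unfold toeplitz_entry.
  rewrite rsum_plus, sum_left_of_diag, sum_right_of_diag by lia.
  assert (rsum j (fun d => h (S d)) <= rsum K (fun d => h (S d)))
    by (apply rsum_mono_len; auto).
  assert (rsum (S K - S j) (fun d => h (S d)) <= rsum K (fun d => h (S d)))
    by (apply rsum_mono_len; auto; lia).
  lra.
Qed.

Definition et_weight (N L : nat) (u : nat -> nat) (k : nat) : R :=
  grid_exp_sum N L u (INR k) / INR k.

Definition et_sum (N K L : nat) (u : nat -> nat) : R := rsum K (fun e => et_weight N L u (S e)).

Lemma et_weight_nonneg N L u k : 0 <= et_weight N L u k.
Proof.
  unfold et_weight. destruct k as [|k]; [simpl; unfold Rdiv; rewrite Rinv_0; lra|].
  apply Rdiv_le_0_compat; [apply grid_exp_sum_nonneg | apply lt_0_INR; lia].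
Qed.

Lemma et_sum_nonneg N K L u : 0 <= et_sum N K L u.
Proof. apply rsum_nonneg. intros. apply et_weight_nonneg. Qed.

Lemma Psi_offdiag_bound N K L u z j l : (0 < L)%nat -> (4 * K <= L)%nat ->
  (forall i, (i < N)%nat -> (u i < L)%nat) -> (j <= K)%nat -> (l <= K)%nat -> l <> j ->
  Rabs (rsum L (fun m => cos ((INR j - INR l) * grid_angle L z m) * Psi N L u m))
  <= INR L / 4 * toeplitz_entry (et_weight N L u) j l.
Proof.
  intros HL HK Hu Hj Hl Hlj. pose proof (pos_INR L).
  eapply Rle_trans.
  { apply Psi_cos_sum_bound; auto. apply small_freq_diff with K; auto. }
  apply Rmult_le_compat_l; [lra|]. unfold toeplitz_entry, et_weight.
  destruct (lt_dec l j) as [Hlt | Hlt], (lt_dec j l) as [Hgt | Hgt]; try lia;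
    rewrite minus_INR by lia.
  - apply lt_INR in Hlt. rewrite Rabs_right; lra.
  - apply lt_INR in Hgt. replace (INR j - INR l) with (- (INR l - INR j)) by ring.
    rewrite grid_exp_sum_opp, Rabs_Ropp, Rabs_right; lra.
Qed.

(* Fejér smoothing changes the sum of Psi by at most (L/2) times the Erdős–Turán sum:
   the diagonal j = l of the expansion reproduces sum Psi. *)
Lemma fejer_smoothing_error N K L u z : (0 < L)%nat -> (4 * K <= L)%nat ->
  (forall i, (i < N)%nat -> (u i < L)%nat) ->
  Rabs (rsum L (fun m => fejer K (grid_angle L z m) * Psi N L u m) - rsum L (Psi N L u))
  <= INR L / 2 * et_sum N K L u.
Proof.
  intros HL HK Hu. assert (HS : 0 < INR (S K)) by (apply lt_0_INR; lia).
  pose proof (pos_INR L) as HL0.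
  apply (Rmult_le_reg_l (INR (S K))); auto.
  rewrite <- (Rabs_right (INR (S K))) at 1 by lra.
  rewrite <- Rabs_mult, Rmult_minus_distr_l, fejer_grid_expand, <- rsum_const, <- rsum_minus.
  eapply Rle_trans; [apply rsum_abs|].
  rewrite <- (rsum_const (S K) (INR L / 2 * et_sum N K L u)). apply rsum_le. intros j Hj.
  rewrite (rsum_diag _ _ j Hj).
  replace (rsum L (fun m => cos ((INR j - INR j) * grid_angle L z m) * Psi N L u m))
    with (rsum L (Psi N L u))
    by (apply rsum_ext; intros; rewrite Rminus_diag, Rmult_0_l, cos_0; ring).
  rewrite Rplus_minus_swap, Rminus_diag, Rplus_0_l.
  eapply Rle_trans; [apply rsum_abs|].
  eapply Rle_trans.
  { apply (rsum_le _ _ (fun l => INR L / 4 * toeplitz_entry (et_weight N L u) j l)).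
    intros l Hl. destruct (Nat.eq_dec l j) as [-> | Hlj].
    - rewrite Rabs_R0. unfold toeplitz_entry. destruct (lt_dec j j); [lia|]. lra.
    - apply (Psi_offdiag_bound N K); auto; lia. }
  rewrite <- rsum_scal.
  pose proof (toeplitz_row_bound K j (et_weight N L u) ltac:(lia) (et_weight_nonneg N L u)).
  unfold et_sum. nra.
Qed.

Lemma count_below_mono N u a b : (a <= b)%nat -> count_below N u a <= count_below N u b.
Proof.
  intros H. apply rsum_le. intros.
  destruct (lt_dec (u i) a), (lt_dec (u i) b); try lra; lia.
Qed.

Lemma count_below_bounds N u a : 0 <= count_below N u a <= INR N.
Proof.
  split.
  - apply rsum_nonneg. intros. destruct (lt_dec (u i) a); lra.
  - rewrite <- (Rmult_1_r (INR N)), <- rsum_const. apply rsum_le. intros.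
    destruct (lt_dec (u i) a); lra.
Qed.

Lemma Psi_bounds N L u m : (0 < L)%nat -> (m <= L)%nat -> - INR N <= Psi N L u m <= INR N.
Proof.
  intros HL Hm. unfold Psi. pose proof (count_below_bounds N u m).
  assert (HL' : 0 < INR L) by (apply lt_0_INR; auto).
  assert (0 <= INR N * INR m / INR L <= INR N).
  { split; [apply Rdiv_le_0_compat; auto; apply Rmult_le_pos; apply pos_INR|].
    apply (Rmult_le_reg_r (INR L)); auto. field_simplify; try lra.
    apply le_INR in Hm. pose proof (pos_INR N). nra. }
  lra.
Qed.

Lemma Psi_L N L u : (0 < L)%nat -> (forall i, (i < N)%nat -> (u i < L)%nat) ->
  Psi N L u L = Psi N L u 0.
Proof.
  intros HL Hu. assert (HL' : 0 < INR L) by (apply lt_0_INR; auto). unfold Psi, count_below.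
  rewrite (rsum_ext N _ (fun _ => 1)), (rsum_ext N (fun i => if lt_dec (u i) 0 then 1 else 0)
    (fun _ => 0)), !rsum_const.
  - simpl. field. lra.
  - intros. destruct (lt_dec (u i) 0); lia || auto.
  - intros i Hi. destruct (lt_dec (u i) L); auto. specialize (Hu i Hi). lia.
Qed.

Definition cyc_dist (L a b : nat) : nat := if le_dec b a then (a - b)%nat else (a + L - b)%nat.

Lemma Psi_one_sided_lipschitz N L u a b : (0 < L)%nat -> (a < L)%nat -> (b < L)%nat ->
  Psi N L u b - INR N * INR (cyc_dist L a b) / INR L <= Psi N L u a.
Proof.
  intros HL Ha Hb. assert (HL' : 0 < INR L) by (apply lt_0_INR; auto). unfold Psi, cyc_dist.
  destruct (le_dec b a).
  - pose proof (count_below_mono N u b a l). rewrite minus_INR by auto.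
    replace (INR N * INR a / INR L)
      with (INR N * INR b / INR L + INR N * (INR a - INR b) / INR L) by (field; lra).
    lra.
  - pose proof (count_below_bounds N u a). pose proof (count_below_bounds N u b).
    rewrite minus_INR, plus_INR by lia.
    replace (INR N * (INR a + INR L - INR b) / INR L)
      with (INR N * INR a / INR L + INR N - INR N * INR b / INR L) by (field; lra).
    lra.
Qed.

Lemma cos_outside_window L a b h : (a < L)%nat -> (b < L)%nat ->
  (2 * h < cyc_dist L a b)%nat -> (8 * h <= L)%nat ->
  cos (grid_angle L (INR b + INR h) a) <= cos (2 * PI * INR h / INR L).
Proof.
  intros Ha Hb Hr Hh. assert (HL' : 0 < INR L) by (apply lt_0_INR; lia). pose proof PI_gt3.
  set (r := cyc_dist L a b) in *.
  assert (Hr2 : (r < L)%nat) by (unfold r, cyc_dist; destruct (le_dec b a); lia).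
  assert (E : exists k : nat, INR a - (INR b + INR h) + INR k * INR L = INR r - INR h).
  { unfold r, cyc_dist. destruct (le_dec b a).
    - exists 0%nat. rewrite minus_INR by auto. simpl. ring.
    - exists 1%nat. rewrite minus_INR, plus_INR by lia. simpl. ring. }
  destruct E as [k Ek].
  replace (cos (grid_angle L (INR b + INR h) a)) with (cos (2 * PI * (INR r - INR h) / INR L)).
  2: { rewrite <- Ek. unfold grid_angle.
       rewrite <- (cos_period (2 * PI * (INR a - (INR b + INR h)) / INR L) k).
       f_equal. field. lra. }
  apply le_INR in Hh. apply lt_INR in Hr, Hr2. rewrite mult_INR in Hh, Hr. simpl in Hh, Hr.
  pose proof (pos_INR h).
  apply cos_le_window.
  - apply Rdiv_le_0_compat; nra.
  - apply (Rmult_le_reg_r (INR L)); auto. field_simplify; nra.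
  - apply Rmult_le_compat_r; [left; apply Rinv_0_lt_compat; auto | nra].
  - apply (Rmult_le_reg_r (INR L)); auto. field_simplify; nra.
Qed.

Lemma cos_gap_ge L h : (1 <= h)%nat -> (8 * h <= L)%nat ->
  18 * (INR h / INR L) ^ 2 <= 2 - 2 * cos (2 * PI * INR h / INR L).
Proof.
  intros H1 H2. assert (HL : 0 < INR L) by (apply lt_0_INR; lia).
  pose proof PI_gt3. pose proof PI_4. pose proof (pos_INR h).
  apply le_INR in H2. rewrite mult_INR in H2. simpl in H2.
  eapply Rle_trans; [|apply one_sub_cos_ge].
  - replace ((2 * PI * INR h / INR L) ^ 2 / 2) with (2 * (PI * PI) * (INR h / INR L) ^ 2)
      by (field; lra).
    assert (0 <= (INR h / INR L) ^ 2) by apply pow2_ge_0. assert (PI * PI >= 9) by nra. nra.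
  - rewrite Rabs_right; [|apply Rle_ge, Rdiv_le_0_compat; nra].
    apply (Rmult_le_reg_r (INR L)); auto. field_simplify; nra.
Qed.

Lemma envelope_below al be del c x gm : 0 < c -> 0 <= del -> 0 <= al + be -> 0 <= x ->
  - be <= gm -> al - del <= gm \/ c <= x -> al - del - (al + be) / c * x <= gm.
Proof.
  intros Hc Hd Hab Hx Hg [Hnear | Hfar].
  - assert (0 <= (al + be) / c * x) by (apply Rmult_le_pos; auto; apply Rdiv_le_0_compat; lra).
    lra.
  - assert (al + be <= (al + be) / c * x).
    { replace (al + be) with ((al + be) / c * c) at 1 by (field; lra).
      apply Rmult_le_compat_l; auto. apply Rdiv_le_0_compat; lra. }
    lra.
Qed.

(* Peak detection: if g lies above such an envelope, the Fejér-smoothed sum of g is at least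
   L (al - del - (al + be)/c * 4/(K+1)), by mass L and concentration of the kernel. *)
Lemma peak_detection K L z (g : nat -> R) al be del c E :
  (0 < L)%nat -> (4 * K <= L)%nat -> 0 < c -> 0 <= del -> 0 <= al + be ->
  (forall m, (m < L)%nat -> - be <= g m) ->
  (forall m, (m < L)%nat -> al - del <= g m \/ c <= 2 - 2 * cos (grid_angle L z m)) ->
  rsum L (fun m => fejer K (grid_angle L z m) * g m) <= INR L / 2 * E ->
  al - del - (al + be) / c * (4 / INR (S K)) <= E / 2.
Proof.
  intros HL HK Hc Hd Hab Hfloor Hwin Hsum.
  assert (HL' : 0 < INR L) by (apply lt_0_INR; auto).
  set (A := al - del). set (B := (al + be) / c).
  assert (HB : 0 <= B) by (apply Rdiv_le_0_compat; lra).
  set (F := fun m => fejer K (grid_angle L z m)).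
  set (X := fun m => 2 - 2 * cos (grid_angle L z m)).
  assert (Hlow : rsum L (fun m => A * F m - B * (X m * F m)) <= rsum L (fun m => F m * g m)).
  { apply rsum_le. intros m Hm.
    assert (A - B * X m <= g m).
    { apply envelope_below; auto. unfold X.
      pose proof (COS_bound (grid_angle L z m)). lra. }
    pose proof (fejer_nonneg K (grid_angle L z m)). fold (F m) in H0. nra. }
  assert (Hconc : rsum L (fun m => X m * F m) <= INR L * (4 / INR (S K))).
  { rewrite <- rsum_const. apply rsum_le. intros. apply fejer_concentration. }
  rewrite rsum_minus, <- !rsum_scal in Hlow. unfold F in Hlow at 1.
  rewrite fejer_grid_mass in Hlow by auto.
  change (rsum L (fun m => F m * g m) <= INR L / 2 * E) in Hsum.
  assert (B * rsum L (fun m => X m * F m) <= B * (INR L * (4 / INR (S K))))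
    by (apply Rmult_le_compat_l; auto).
  apply (Rmult_le_reg_l (INR L)); auto. lra.
Qed.

Section PsiOscillation.

Variables (N K L : nat) (u : nat -> nat).
Hypotheses (HL : (0 < L)%nat) (HK : (4 * K <= L)%nat)
  (Hu : forall i, (i < N)%nat -> (u i < L)%nat).

Let mu := rsum L (Psi N L u) / INR L.

Lemma fejer_centered_error z :
  Rabs (rsum L (fun m => fejer K (grid_angle L z m) * (Psi N L u m - mu)))
  <= INR L / 2 * et_sum N K L u.
Proof.
  assert (HL' : 0 < INR L) by (apply lt_0_INR; auto).
  replace (rsum L (fun m => fejer K (grid_angle L z m) * (Psi N L u m - mu)))
    with (rsum L (fun m => fejer K (grid_angle L z m) * Psi N L u m) - rsum L (Psi N L u)).
  - apply fejer_smoothing_error; auto.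
  - rewrite (rsum_ext L (fun m => fejer K (grid_angle L z m) * (Psi N L u m - mu))
                       (fun m => fejer K (grid_angle L z m) * Psi N L u m
                                   - mu * fejer K (grid_angle L z m))) by (intros; ring).
    rewrite rsum_minus, <- rsum_scal, fejer_grid_mass by auto. unfold mu. field. lra.
Qed.

Lemma Psi_window_drop a b h : (a < L)%nat -> (b < L)%nat -> (cyc_dist L a b <= 2 * h)%nat ->
  Psi N L u b - 2 * INR h * INR N / INR L <= Psi N L u a.
Proof.
  intros Ha Hb Hd. assert (HL' : 0 < INR L) by (apply lt_0_INR; auto).
  pose proof (Psi_one_sided_lipschitz N L u a b HL Ha Hb).
  apply le_INR in Hd. rewrite mult_INR in Hd. simpl in Hd.
  assert (INR N * INR (cyc_dist L a b) / INR L <= 2 * INR h * INR N / INR L).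
  { unfold Rdiv. apply Rmult_le_compat_r; [left; apply Rinv_0_lt_compat; auto|].
    pose proof (pos_INR N). nra. }
  lra.
Qed.

Variables (m0 m1 h : nat).
Hypotheses (Hm0 : (m0 < L)%nat) (Hm1 : (m1 < L)%nat)
  (Hmax : forall m, (m < L)%nat -> Psi N L u m <= Psi N L u m0)
  (Hmin : forall m, (m < L)%nat -> Psi N L u m1 <= Psi N L u m)
  (Hh1 : (1 <= h)%nat) (Hh8 : (8 * h <= L)%nat).

Let al := Psi N L u m0 - mu.
Let be := mu - Psi N L u m1.
Let gap := 2 - 2 * cos (2 * PI * INR h / INR L).
Let del := 2 * INR h * INR N / INR L.

Lemma gap_pos : 0 < gap.
Proof.
  pose proof (cos_gap_ge L h Hh1 Hh8).
  assert (0 < INR h / INR L) by (apply Rdiv_lt_0_compat; apply lt_0_INR; lia).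
  unfold gap. nra.
Qed.

Lemma del_nonneg : 0 <= del.
Proof.
  apply Rdiv_le_0_compat; [|apply lt_0_INR; auto].
  pose proof (pos_INR h); pose proof (pos_INR N); nra.
Qed.

Lemma al_be_nonneg : 0 <= al + be.
Proof. unfold al, be. pose proof (Hmin m0 Hm0). lra. Qed.

(* The peak of Psi at m0 persists on a window of width 2h, which the kernel centred at
   m0 + h detects. *)
Lemma Psi_peak : al - del - (al + be) / gap * (4 / INR (S K)) <= et_sum N K L u / 2.
Proof.
  apply (peak_detection K L (INR m0 + INR h) (fun m => Psi N L u m - mu));
    auto using gap_pos, del_nonneg, al_be_nonneg.
  - intros m Hm. unfold be. pose proof (Hmin m Hm). lra.
  - intros m Hm. destruct (le_dec (cyc_dist L m m0) (2 * h)).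
    + left. pose proof (Psi_window_drop m m0 h Hm Hm0 l). unfold al, del. lra.
    + right. pose proof (cos_outside_window L m m0 h Hm Hm0 ltac:(lia) Hh8). unfold gap. lra.
  - eapply Rle_trans; [apply Rle_abs | apply fejer_centered_error].
Qed.

(* Symmetrically, the pit of Psi at m1 is detected by the kernel centred at m1 - h. *)
Lemma Psi_pit : be - del - (al + be) / gap * (4 / INR (S K)) <= et_sum N K L u / 2.
Proof.
  rewrite (Rplus_comm al be).
  apply (peak_detection K L (INR m1 - INR h) (fun m => mu - Psi N L u m));
    auto using gap_pos, del_nonneg.
  - rewrite Rplus_comm. apply al_be_nonneg.
  - intros m Hm. unfold al. pose proof (Hmax m Hm). lra.
  - intros m Hm. destruct (le_dec (cyc_dist L m1 m) (2 * h)).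
    + left. pose proof (Psi_window_drop m1 m h Hm1 Hm l). unfold be, del. lra.
    + right. pose proof (cos_outside_window L m1 m h Hm1 Hm ltac:(lia) Hh8).
      replace (grid_angle L (INR m1 - INR h) m) with (- grid_angle L (INR m + INR h) m1)
        by (unfold grid_angle; field; apply not_0_INR; lia).
      rewrite cos_neg. unfold gap. lra.
  - rewrite (rsum_ext L (fun m => fejer K (grid_angle L (INR m1 - INR h) m) * (mu - Psi N L u m))
                       (fun m => -1 * (fejer K (grid_angle L (INR m1 - INR h) m)
                                            * (Psi N L u m - mu)))) by (intros; ring).
    rewrite <- rsum_scal. eapply Rle_trans; [|apply (fejer_centered_error (INR m1 - INR h))].
    rewrite <- Rabs_Ropp. eapply Rle_trans; [|apply Rle_abs]. lra.
Qed.

End PsiOscillation.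

(* Choice of the window: for a deviation g >= 16 N / L take h = floor (L g / (16 N)),
   so that h / L is comparable to g / N. *)
Lemma window_scale_exists (N L : nat) g : (1 <= N)%nat -> (0 < L)%nat ->
  16 * INR N / INR L <= g -> g <= 2 * INR N ->
  exists h, (1 <= h)%nat /\ (8 * h <= L)%nat /\
    g / (32 * INR N) <= INR h / INR L <= g / (16 * INR N).
Proof.
  intros HN HL Hg1 Hg2.
  assert (HN' : 1 <= INR N) by (apply le_INR in HN; auto).
  assert (HL' : 0 < INR L) by (apply lt_0_INR; auto).
  set (x := INR L * g / (16 * INR N)).
  assert (Hx1 : 1 <= x).
  { assert (E : 16 * INR N = INR L * (16 * INR N / INR L)) by (field; lra).
    assert (16 * INR N <= INR L * g) by nra.
    unfold x. apply (Rmult_le_reg_r (16 * INR N)); [lra|]. field_simplify; lra. }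
  destruct (nat_floor x ltac:(lra)) as [h [Hh1 Hh2]].
  assert (Hh : (1 <= h)%nat) by (destruct h; [simpl in Hh2; lra | lia]).
  assert (HhR : 1 <= INR h) by (apply le_INR in Hh; auto).
  exists h. split; [auto|]. split.
  - apply INR_le. rewrite mult_INR. replace (INR 8) with 8 by (simpl; lra).
    assert (x * 8 <= INR L).
    { unfold x. apply (Rmult_le_reg_r (2 * INR N)); [lra|]. field_simplify; [|lra]. nra. }
    lra.
  - split.
    + apply (Rmult_le_reg_r (32 * INR N * INR L)); [nra|]. field_simplify; [|lra|lra].
      unfold x in Hh2. apply (Rmult_lt_compat_r (16 * INR N)) in Hh2; [|lra].
      field_simplify in Hh2; [|lra]. nra.
    + apply (Rmult_le_reg_r (16 * INR N * INR L)); [nra|]. field_simplify; [|lra|lra].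
      unfold x in Hh1. apply (Rmult_le_compat_r (16 * INR N)) in Hh1; [|lra].
      field_simplify in Hh1; [|lra]. nra.
Qed.

(* The arithmetic of the optimization: a deviation g surviving the peak-detection
   inequality at a scale q = h / L comparable to g / N is O(E + sqrt N). *)
Lemma window_scale_arith (n k q c g sp E : R) : 1 <= n -> n <= k -> 0 < q ->
  18 * q ^ 2 <= c -> g / (32 * n) <= q <= g / (16 * n) -> 0 <= sp <= 2 * g -> 0 <= E ->
  g - 2 * n * q - sp / c * (4 / k) <= E / 2 -> g <= E + 35 * sqrt n.
Proof.
  intros Hn Hk Hq Hc [Hq1 Hq2] [HS0 HS] HE H.
  assert (Hg0 : 0 <= g).
  { apply (Rmult_le_compat_r (16 * n)) in Hq2; [|lra]. field_simplify in Hq2; nra. }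
  assert (Hgq : g <= 32 * n * q).
  { apply (Rmult_le_compat_r (32 * n)) in Hq1; [|lra]. field_simplify in Hq1; lra. }
  assert (Hnq : 2 * n * q <= g / 8).
  { apply (Rmult_le_compat_r (16 * n)) in Hq2; [|lra]. field_simplify in Hq2; lra. }
  assert (Hc0 : 0 < c) by nra.
  set (T := sp / c * (4 / k)) in *.
  assert (HTg : T * g <= 456 * n).
  { assert (g * g <= 1024 * (n * n) * (q * q)) by nra.
    assert (sp * g <= 2 * (g * g)) by nra.
    assert (sp * g <= 2048 / 18 * (n * n) * c) by nra.
    unfold T. replace (sp / c * (4 / k) * g) with (4 * (sp * g) / (c * k)) by (field; lra).
    apply (Rmult_le_reg_r (c * k)); [nra|]. unfold Rdiv.
    rewrite Rmult_assoc, Rinv_l, Rmult_1_r by nra.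
    assert (n * n * c <= n * k * c) by (apply Rmult_le_compat_r; nra). nra. }
  destruct (Rle_dec g (E + 35 * sqrt n)) as [ok | ko]; auto. exfalso.
  assert (g * g > 1225 * n).
  { pose proof (sqrt_pos n). assert (sqrt n * sqrt n = n) by (apply sqrt_sqrt; lra).
    assert (Hs : 35 * sqrt n < g) by lra.
    assert (35 * sqrt n * (35 * sqrt n) < g * g) by (apply Rmult_le_0_lt_compat; lra).
    lra. }
  assert (3 / 8 * g <= T) by (pose proof (sqrt_pos n); lra).
  assert (3 / 8 * g * g <= T * g) by (apply Rmult_le_compat_r; lra). lra.
Qed.

Lemma deviation_bound (N K L : nat) (g sp E : R) : (1 <= N)%nat -> (N <= S K)%nat ->
  (16 * N <= L)%nat -> 0 <= g <= 2 * INR N -> 0 <= sp <= 2 * g -> 0 <= E ->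
  (forall h, (1 <= h)%nat -> (8 * h <= L)%nat ->
     g - 2 * INR h * INR N / INR L
       - sp / (2 - 2 * cos (2 * PI * INR h / INR L)) * (4 / INR (S K)) <= E / 2) ->
  g <= 1 + E + 35 * sqrt (INR N).
Proof.
  intros HN HNK HL Hg HS HE H.
  assert (HN' : 1 <= INR N) by (apply le_INR in HN; auto).
  assert (HL' : 16 * INR N <= INR L) by (apply le_INR in HL; rewrite mult_INR in HL; simpl in HL; lra).
  destruct (Rlt_dec g (16 * INR N / INR L)) as [Hsmall | Hbig].
  { assert (16 * INR N / INR L <= 1)
      by (apply (Rmult_le_reg_r (INR L)); [lra|]; field_simplify; lra).
    pose proof (sqrt_pos (INR N)). lra. }
  destruct (window_scale_exists N L g HN ltac:(lia) ltac:(lra) ltac:(lra))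
    as [h [Hh1 [Hh8 Hq]]].
  pose proof (sqrt_pos (INR N)).
  cut (g <= E + 35 * sqrt (INR N)); [lra|].
  apply (window_scale_arith (INR N) (INR (S K)) (INR h / INR L)
           (2 - 2 * cos (2 * PI * INR h / INR L)) g sp E); auto.
  - apply le_INR; auto.
  - apply Rdiv_lt_0_compat; apply lt_0_INR; lia.
  - apply cos_gap_ge; auto.
  - replace (2 * INR N * (INR h / INR L)) with (2 * INR h * INR N / INR L)
      by (field; lra).
    apply H; auto.
Qed.

Lemma Psi_oscillation N L u : (1 <= N)%nat -> (16 * N <= L)%nat ->
  (forall i, (i < N)%nat -> (u i < L)%nat) ->
  forall m m', (m <= L)%nat -> (m' <= L)%nat ->
  Psi N L u m' - Psi N L u m <= 2 + 2 * et_sum N N L u + 70 * sqrt (INR N).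
Proof.
  intros HN HL Hu. assert (HL0 : (0 < L)%nat) by lia. assert (HK : (4 * N <= L)%nat) by lia.
  assert (HL' : 0 < INR L) by (apply lt_0_INR; auto).
  destruct (argmax_ex L (Psi N L u) HL0) as [m0 [Hm0 Hmax]].
  destruct (argmin_ex L (Psi N L u) HL0) as [m1 [Hm1 Hmin]].
  assert (Hrange : forall m, (m <= L)%nat ->
    Psi N L u m1 <= Psi N L u m <= Psi N L u m0).
  { intros m Hm. destruct (Nat.eq_dec m L) as [-> | Hne].
    - rewrite Psi_L by auto. split; [apply Hmin | apply Hmax]; lia.
    - split; [apply Hmin | apply Hmax]; lia. }
  set (mu := rsum L (Psi N L u) / INR L).
  assert (Hmu : Psi N L u m1 <= mu <= Psi N L u m0).
  { unfold mu. split; apply (Rmult_le_reg_r (INR L)); auto; unfold Rdiv;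
      rewrite Rmult_assoc, Rinv_l, Rmult_1_r by lra; rewrite Rmult_comm, <- rsum_const;
      apply rsum_le; auto. }
  pose proof (Psi_bounds N L u m0 HL0 ltac:(lia)). pose proof (Psi_bounds N L u m1 HL0 ltac:(lia)).
  pose proof (et_sum_nonneg N N L u).
  assert (Hspread : Psi N L u m0 - Psi N L u m1
                    <= 2 * (1 + et_sum N N L u + 35 * sqrt (INR N))).
  { destruct (Rle_dec (mu - Psi N L u m1) (Psi N L u m0 - mu)).
    - cut (Psi N L u m0 - mu <= 1 + et_sum N N L u + 35 * sqrt (INR N)); [lra|].
      apply (deviation_bound N N L _ ((Psi N L u m0 - mu) + (mu - Psi N L u m1))); auto; try lra.
      intros h Hh1 Hh8. exact (Psi_peak N N L u HL0 HK Hu m0 m1 h Hm0 Hm1 Hmin Hh1 Hh8).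
    - cut (mu - Psi N L u m1 <= 1 + et_sum N N L u + 35 * sqrt (INR N)); [lra|].
      apply (deviation_bound N N L _ ((Psi N L u m0 - mu) + (mu - Psi N L u m1))); auto; try lra.
      intros h Hh1 Hh8.
      exact (Psi_pit N N L u HL0 HK Hu m0 m1 h Hm0 Hm1 Hmax Hmin Hh1 Hh8). }
  intros m m' Hm Hm'. pose proof (Hrange m Hm). pose proof (Hrange m' Hm'). lra.
Qed.

Definition indicator (a b y : R) : R := if Rle_dec a y then if Rle_dec y b then 1 else 0 else 0.

Lemma count_in_as_rsum n r a b :
  INR (count_in n r a b) = rsum n (fun i => indicator a b (fracR (r i))).
Proof.
  induction n; auto. simpl count_in. rewrite plus_INR, IHn. simpl rsum. f_equal.
  unfold indicator. destruct (Rle_dec a (fracR (r n))), (Rle_dec (fracR (r n)) b); auto.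
Qed.

Lemma indicator_bounds a b y : 0 <= indicator a b y <= 1.
Proof. unfold indicator. destruct (Rle_dec a y), (Rle_dec y b); lra. Qed.

Lemma indicator_le_grid L a b y u A B : (0 < L)%nat -> 0 <= a -> a <= b ->
  INR u <= INR L * y < INR u + 1 -> INR A <= INR L * a -> INR B <= INR L * b < INR B + 1 ->
  (u < L)%nat ->
  indicator a b y <= (if lt_dec u (Nat.min (S B) L) then 1 else 0) - (if lt_dec u A then 1 else 0).
Proof.
  intros HL Ha Hab Hy HA HB Hu. assert (HL' : 0 < INR L) by (apply lt_0_INR; auto).
  unfold indicator. destruct (Rle_dec a y); [destruct (Rle_dec y b)|].
  - assert (INR L * a <= INR L * y) by (apply Rmult_le_compat_l; lra).
    assert (INR L * y <= INR L * b) by (apply Rmult_le_compat_l; lra).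
    assert (u < S B)%nat by (apply INR_lt; rewrite S_INR; lra).
    destruct (lt_dec u (Nat.min (S B) L)); [|lia].
    destruct (lt_dec u A) as [HuA | HuA]; [|lra]. apply le_INR in HuA. rewrite S_INR in HuA. lra.
  - destruct (lt_dec u A), (lt_dec u (Nat.min (S B) L)); try lra.
    assert (INR L * a <= INR L * b) by (apply Rmult_le_compat_l; lra).
    assert (A < S B)%nat by (apply INR_lt; rewrite S_INR; lra). lia.
  - destruct (lt_dec u A), (lt_dec u (Nat.min (S B) L)); try lra.
    assert (INR L * a <= INR L * b) by (apply Rmult_le_compat_l; lra).
    assert (A < S B)%nat by (apply INR_lt; rewrite S_INR; lra). lia.
Qed.

Lemma grid_le_indicator L a b y u A B : (0 < L)%nat ->
  INR u <= INR L * y < INR u + 1 -> INR L * a < INR A + 1 -> INR B <= INR L * b ->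
  (u < L)%nat ->
  (if lt_dec u B then 1 else 0) - (if lt_dec u (Nat.min (S A) L) then 1 else 0)
  <= indicator a b y.
Proof.
  intros HL Hy HA HB Hu. assert (HL' : 0 < INR L) by (apply lt_0_INR; auto).
  pose proof (indicator_bounds a b y).
  destruct (lt_dec u B) as [HuB | HuB], (lt_dec u (Nat.min (S A) L)); try lra.
  assert (HuA : (S A <= u)%nat) by lia. apply le_INR in HuA, HuB.
  rewrite S_INR in HuA, HuB.
  unfold indicator. destruct (Rle_dec a y) as [r1 | r1]; [destruct (Rle_dec y b) as [r2 | r2]|].
  - lra.
  - exfalso. apply r2. apply (Rmult_le_reg_l (INR L)); auto. lra.
  - exfalso. apply r1. apply (Rmult_le_reg_l (INR L)); auto. lra.
Qed.

Section IntervalCount.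

Variables (n L : nat) (y : nat -> R) (u : nat -> nat) (a b : R).
Hypotheses (Hn : (1 <= n)%nat) (HL : (16 * n <= L)%nat)
  (Hu : forall i, (i < n)%nat -> INR (u i) <= INR L * y i < INR (u i) + 1 /\ (u i < L)%nat)
  (Ha : 0 <= a) (Hab : a <= b) (Hb : b <= 1).

Let osc := 2 + 2 * et_sum n n L u + 70 * sqrt (INR n).

Lemma Psi_osc_on_points : forall m m', (m <= L)%nat -> (m' <= L)%nat ->
  Psi n L u m' - Psi n L u m <= osc.
Proof. apply Psi_oscillation; auto. intros i Hi. apply Hu; auto. Qed.

Lemma floor_scaled x : 0 <= x <= 1 -> exists A, INR A <= INR L * x < INR A + 1 /\ (A <= L)%nat.
Proof.
  intros Hx. assert (HL' : 0 < INR L) by (apply lt_0_INR; lia).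
  destruct (nat_floor (INR L * x)) as [A HA]; [nra|].
  exists A. split; auto. apply INR_le. nra.
Qed.

(* Counting points with fractional parts in [a, b] via Psi at the grid points near a and b;
   rounding to the grid costs at most 2n/L on each side. *)
Lemma interval_count_upper :
  rsum n (fun i => indicator a b (y i)) - INR n * (b - a) <= osc + 2 * INR n / INR L.
Proof.
  assert (HL' : 0 < INR L) by (apply lt_0_INR; lia). pose proof (pos_INR n).
  destruct (floor_scaled a ltac:(lra)) as [A [HA HAL]].
  destruct (floor_scaled b ltac:(lra)) as [B [HB HBL]].
  set (q := Nat.min (S B) L).
  assert (C : rsum n (fun i => indicator a b (y i)) <= count_below n u q - count_below n u A).
  { unfold count_below. rewrite <- rsum_minus. apply rsum_le. intros i Hi.
    destruct (Hu i Hi). apply (indicator_le_grid L); try lra; auto; lia. }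
  assert (Hq : INR q <= INR B + 1) by (unfold q; rewrite <- S_INR; apply le_INR; lia).
  pose proof (Psi_osc_on_points A q HAL ltac:(unfold q; lia)) as D. unfold Psi in D.
  assert (INR n * INR q / INR L - INR n * INR A / INR L <= INR n * (b - a) + 2 * INR n / INR L).
  { replace (INR n * INR q / INR L - INR n * INR A / INR L)
      with (INR n * (INR q - INR A) / INR L) by (field; lra).
    replace (INR n * (b - a) + 2 * INR n / INR L)
      with (INR n * (INR L * b - INR L * a + 2) / INR L) by (field; lra).
    unfold Rdiv. apply Rmult_le_compat_r; [left; apply Rinv_0_lt_compat; lra|].
    apply Rmult_le_compat_l; lra. }
  lra.
Qed.

Lemma interval_count_lower :
  INR n * (b - a) - rsum n (fun i => indicator a b (y i)) <= osc + 2 * INR n / INR L.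
Proof.
  assert (HL' : 0 < INR L) by (apply lt_0_INR; lia). pose proof (pos_INR n).
  destruct (floor_scaled a ltac:(lra)) as [A [HA HAL]].
  destruct (floor_scaled b ltac:(lra)) as [B [HB HBL]].
  set (p := Nat.min (S A) L).
  assert (C : count_below n u B - count_below n u p <= rsum n (fun i => indicator a b (y i))).
  { unfold count_below. rewrite <- rsum_minus. apply rsum_le. intros i Hi.
    destruct (Hu i Hi). apply (grid_le_indicator L); lra || lia. }
  assert (Hp : INR p <= INR A + 1) by (unfold p; rewrite <- S_INR; apply le_INR; lia).
  pose proof (Psi_osc_on_points B p HBL ltac:(unfold p; lia)) as D. unfold Psi in D.
  assert (INR n * INR p / INR L - INR n * INR B / INR L <= INR n * (a - b) + 2 * INR n / INR L).
  { replace (INR n * INR p / INR L - INR n * INR B / INR L)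
      with (INR n * (INR p - INR B) / INR L) by (field; lra).
    replace (INR n * (a - b) + 2 * INR n / INR L)
      with (INR n * (INR L * a - INR L * b + 2) / INR L) by (field; lra).
    unfold Rdiv. apply Rmult_le_compat_r; [left; apply Rinv_0_lt_compat; lra|].
    apply Rmult_le_compat_l; lra. }
  lra.
Qed.

End IntervalCount.

Lemma hadamard_mod_as_Cmod n v s k th :
  hadamard_mod n v s k th = Cmod (csum n (fun i => expi (2 * PI * (INR k * s i + INR (v i) * th)))).
Proof. unfold hadamard_mod, Cmod. rewrite csum_fst, csum_snd. reflexivity. Qed.

Lemma bounded_on_range (v : nat -> nat) n : exists V, forall i, (i < n)%nat -> (v i <= V)%nat.
Proof.
  induction n as [|n [V HV]]; [exists 0%nat; lia|].
  exists (Nat.max V (v n)). intros i Hi.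
  destruct (Nat.eq_dec i n) as [-> | Hne]; [lia|]. specialize (HV i ltac:(lia)). lia.
Qed.

(* Parseval on a grid finer than all exponent differences: the mean of |f|^2 over the
   L-th roots of unity is n. *)
Lemma grid_parseval n v s L : (0 < L)%nat ->
  (forall i j, (i < n)%nat -> (j < n)%nat -> v i = v j -> i = j) ->
  (forall i, (i < n)%nat -> 4 * INR (v i) <= INR L) ->
  rsum L (fun J => hadamard_mod n v s 1 (INR J / INR L) ^ 2) = INR L * INR n.
Proof.
  intros HL Hv HvL.
  set (a := fun J i => 2 * PI * (INR 1 * s i + INR (v i) * (INR J / INR L))).
  rewrite (rsum_ext _ _ (fun J => rsum n (fun i => rsum n (fun i' => cos (a J i - a J i')))))
    by (intros; rewrite hadamard_mod_as_Cmod; apply Cmod_csum_expi_sq).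
  rewrite rsum_swap, Rmult_comm, <- rsum_const. apply rsum_ext. intros i Hi.
  rewrite rsum_swap, (rsum_diag _ _ i Hi).
  rewrite (rsum_ext L _ (fun _ => 1)) by (intros; rewrite Rminus_diag, cos_0; auto).
  rewrite (rsum_ext n _ (fun _ => 0)), !rsum_const; [ring|].
  intros i' Hi'. destruct (Nat.eq_dec i' i) as [-> | Hne]; auto.
  assert (Hd : v i <> v i') by (intro E; apply Hne; symmetry; apply Hv; auto).
  rewrite (rsum_ext L _ (fun J => cos (2 * PI * (s i - s i')
                                  + (INR (v i) - INR (v i')) * (2 * PI * INR J / INR L)))).
  - apply grid_cos_orth; auto.
    pose proof (HvL i Hi). pose proof (HvL i' Hi'). pose proof (pos_INR (v i)).
    pose proof (pos_INR (v i')).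
    destruct (Rle_dec 0 (INR (v i) - INR (v i')));
      [rewrite Rabs_right by lra | rewrite Rabs_left by lra]; lra.
  - intros J _. unfold a. f_equal. simpl. field. apply not_0_INR. lia.
Qed.

Lemma hadamard_sqrt_lower n v s : (1 <= n)%nat ->
  (forall i j, (i < n)%nat -> (j < n)%nat -> v i = v j -> i = j) ->
  exists th, sqrt (INR n) <= hadamard_mod n v s 1 th.
Proof.
  intros Hn Hv. destruct (bounded_on_range v n) as [V HV].
  set (L := (4 * (V + 1))%nat). assert (HL : (0 < L)%nat) by (unfold L; lia).
  assert (HvL : forall i, (i < n)%nat -> 4 * INR (v i) <= INR L).
  { intros i Hi. pose proof (le_INR _ _ (HV i Hi)). unfold L.
    rewrite mult_INR, plus_INR. simpl. lra. }
  destruct (rsum_exists_ge L (fun J => hadamard_mod n v s 1 (INR J / INR L) ^ 2) (INR n) HL)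
    as [J [_ HJ]].
  { rewrite grid_parseval; auto. lra. }
  exists (INR J / INR L).
  rewrite <- (sqrt_pow2 (hadamard_mod n v s 1 _)) by (unfold hadamard_mod; apply sqrt_pos).
  apply sqrt_le_1_alt. auto.
Qed.

Definition grid_floor (L : nat) (y : R) : nat := Z.to_nat (Int_part (INR L * y)).

Lemma grid_floor_spec L y : (0 < L)%nat -> 0 <= y < 1 ->
  INR (grid_floor L y) <= INR L * y < INR (grid_floor L y) + 1 /\ (grid_floor L y < L)%nat.
Proof.
  intros HL Hy. assert (HL' : 0 < INR L) by (apply lt_0_INR; auto).
  destruct (base_Int_part (INR L * y)) as [H1 H2].
  assert (0 <= Int_part (INR L * y))%Z.
  { assert (-1 < Int_part (INR L * y))%Z by (apply lt_IZR; simpl; nra). lia. }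
  unfold grid_floor. rewrite INR_IZR_INZ, Z2Nat.id by auto. split; [lra|].
  apply INR_lt. rewrite INR_IZR_INZ, Z2Nat.id by auto. nra.
Qed.

Lemma fracR_bounds x : 0 <= fracR x < 1.
Proof. unfold fracR. destruct (base_fp x). lra. Qed.

Lemma grid_exp_sum_approx n L (u : nat -> nat) (y : nat -> R) k : (0 < L)%nat ->
  (forall i, (i < n)%nat -> INR (u i) <= INR L * y i < INR (u i) + 1) ->
  grid_exp_sum n L u (INR k)
  <= Cmod (csum n (fun i => expi (2 * PI * INR k * y i))) + INR n * (2 * PI * INR k / INR L).
Proof.
  intros HL Hu. assert (HL' : 0 < INR L) by (apply lt_0_INR; auto).
  pose proof PI_gt3. pose proof (pos_INR k). unfold grid_exp_sum.
  set (B := csum n (fun i => expi (2 * PI * INR k * y i))).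
  set (D := csum n (fun i => Cminus (expi (INR (u i) * (2 * PI * INR k / INR L)))
                                    (expi (2 * PI * INR k * y i)))).
  replace (csum n (fun i => expi (INR (u i) * (2 * PI * INR k / INR L)))) with (Cplus B D)
    by (unfold B, D; rewrite csum_minus; apply ceq; simpl; ring).
  eapply Rle_trans; [apply Cmod_triangle|]. apply Rplus_le_compat_l.
  eapply Rle_trans; [apply Cmod_csum|]. rewrite <- rsum_const. apply rsum_le. intros i Hi.
  eapply Rle_trans; [apply Cmod_expi_sub_le|]. specialize (Hu i Hi).
  replace (INR (u i) * (2 * PI * INR k / INR L) - 2 * PI * INR k * y i)
    with ((2 * PI * INR k / INR L) * (INR (u i) - INR L * y i)) by (field; lra).
  assert (Hc : 0 <= 2 * PI * INR k / INR L) by (apply Rdiv_le_0_compat; nra).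
  rewrite Rabs_mult, (Rabs_right _ (Rle_ge _ _ Hc)).
  rewrite <- (Rmult_1_r (2 * PI * INR k / INR L)) at 2. apply Rmult_le_compat_l; auto.
  apply Rabs_le. lra.
Qed.

(* The exponential sum of frequency k of the fractional parts {s_i + v_i t} is a value of
   the k-th Hadamard power on the unit circle (at the point e^{2 pi i k t}). *)
Lemma frac_exp_sum_le_M n v s t (M : nat -> R) k : is_lub (hadamard_mod_set n v s k) (M k) ->
  Cmod (csum n (fun i => expi (2 * PI * INR k * fracR (s i + INR (v i) * t)))) <= M k.
Proof.
  intros [Hub _].
  replace (Cmod (csum n (fun i => expi (2 * PI * INR k * fracR (s i + INR (v i) * t)))))
    with (hadamard_mod n v s k (INR k * t)) by (
    rewrite hadamard_mod_as_Cmod; f_equal; apply csum_ext; intros i _;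
    set (x := s i + INR (v i) * t); unfold fracR, frac_part;
    replace (2 * PI * (INR k * s i + INR (v i) * (INR k * t)))
      with (2 * PI * INR k * (x - IZR (Int_part x)) + 2 * PI * IZR (Z.of_nat k * Int_part x))
      by (rewrite mult_IZR, <- INR_IZR_INZ; unfold x; ring);
    rewrite expi_add, expi_intZ, Cmult_1_r; auto).
  apply Hub. exists (INR k * t). auto.
Qed.

Lemma et_sum_le_hadamard n v s t (M : nat -> R) L (u : nat -> nat) : (0 < L)%nat ->
  (forall i, (i < n)%nat ->
     INR (u i) <= INR L * fracR (s i + INR (v i) * t) < INR (u i) + 1) ->
  (forall k, is_lub (hadamard_mod_set n v s k) (M k)) ->
  et_sum n n L u <= rsum n (fun j => M (S j) / INR (S j)) + INR n * INR n * (2 * PI) / INR L.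
Proof.
  intros HL Hu HM. assert (HL' : 0 < INR L) by (apply lt_0_INR; auto).
  apply Rle_trans with (rsum n (fun e => M (S e) / INR (S e) + INR n * (2 * PI / INR L))).
  - apply rsum_le. intros e He. assert (HS : 0 < INR (S e)) by (apply lt_0_INR; lia).
    unfold et_weight.
    pose proof (grid_exp_sum_approx n L u _ (S e) HL Hu).
    pose proof (frac_exp_sum_le_M n v s t M (S e) (HM (S e))).
    replace (M (S e) / INR (S e) + INR n * (2 * PI / INR L))
      with ((M (S e) + INR n * (2 * PI * INR (S e) / INR L)) / INR (S e)) by (field; lra).
    unfold Rdiv. apply Rmult_le_compat_r; [left; apply Rinv_0_lt_compat; auto|]. lra.
  - rewrite rsum_plus, rsum_const. apply Req_le. field. lra.
Qed.

Lemma hadamard_lub_nonneg n v s (M : nat -> R) k : is_lub (hadamard_mod_set n v s k) (M k) ->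
  0 <= M k.
Proof.
  intros [Hub _]. apply Rle_trans with (hadamard_mod n v s k 0).
  - unfold hadamard_mod. apply sqrt_pos.
  - apply Hub. exists 0. auto.
Qed.

(* The k = 1 term alone dominates sqrt n. *)
Lemma sqrt_le_hadamard_sum n v s (M : nat -> R) : (1 <= n)%nat ->
  (forall i j, (i < n)%nat -> (j < n)%nat -> v i = v j -> i = j) ->
  (forall k, is_lub (hadamard_mod_set n v s k) (M k)) ->
  sqrt (INR n) <= rsum n (fun j => M (S j) / INR (S j)).
Proof.
  intros Hn Hv HM. destruct (hadamard_sqrt_lower n v s Hn Hv) as [th Hth].
  destruct (HM 1%nat) as [Hub _].
  assert (hadamard_mod n v s 1 th <= M 1%nat) by (apply Hub; exists th; auto).
  destruct n as [|n']; [lia|]. rewrite rsum_shift.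
  assert (0 <= rsum n' (fun i => M (S (S i)) / INR (S (S i)))).
  { apply rsum_nonneg. intros. apply Rdiv_le_0_compat;
      [apply (hadamard_lub_nonneg (S n') v s); auto | apply lt_0_INR; lia]. }
  replace (M 1%nat / INR 1) with (M 1%nat) by (simpl; field). lra.
Qed.

(* The mesh L = 16 (n^2 + 1) makes both rounding errors at most 1. *)
Lemma mesh_rounding_small n : (1 <= n)%nat ->
  INR n * INR n * (2 * PI) / INR (16 * (n * n + 1)) <= 1 /\
  2 * INR n / INR (16 * (n * n + 1)) <= 1.
Proof.
  intros Hn. apply le_INR in Hn. pose proof PI_4.
  replace (INR (16 * (n * n + 1))) with (16 * (INR n * INR n + 1))
    by (rewrite mult_INR, plus_INR, mult_INR; simpl; ring).
  split; apply (Rmult_le_reg_r (16 * (INR n * INR n + 1))); try nra; unfold Rdiv;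
    rewrite Rmult_assoc, Rinv_l, ?Rmult_1_r by nra; nra.
Qed.

Lemma interval_bias_bound n v s t (M : nat -> R) a b : (1 <= n)%nat ->
  (forall i j, (i < n)%nat -> (j < n)%nat -> v i = v j -> i = j) ->
  (forall k, is_lub (hadamard_mod_set n v s k) (M k)) ->
  0 <= a -> a <= b -> b <= 1 ->
  Rabs (INR (count_in n (fun i => s i + INR (v i) * t) a b) - INR n * (b - a))
  <= 75 * (1 + rsum n (fun j => M (S j) / INR (S j))).
Proof.
  intros Hn Hv HM Ha Hab Hb.
  set (L := (16 * (n * n + 1))%nat). assert (HL : (0 < L)%nat) by (unfold L; lia).
  set (y := fun i => fracR (s i + INR (v i) * t)).
  set (u := fun i => grid_floor L (y i)).
  assert (Hu : forall i, (i < n)%nat -> INR (u i) <= INR L * y i < INR (u i) + 1 /\ (u i < L)%nat)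
    by (intros; apply grid_floor_spec, fracR_bounds; auto).
  destruct (mesh_rounding_small n Hn) as [Hround1 Hround2]. fold L in Hround1, Hround2.
  pose proof (et_sum_le_hadamard n v s t M L u HL ltac:(intros; apply Hu; auto) HM).
  pose proof (sqrt_le_hadamard_sum n v s M Hn Hv HM).
  pose proof (interval_count_upper n L y u a b Hn ltac:(unfold L; nia) Hu Ha Hab Hb).
  pose proof (interval_count_lower n L y u a b Hn ltac:(unfold L; nia) Hu Ha Hab Hb).
  pose proof (et_sum_nonneg n n L u).
  rewrite count_in_as_rsum.
  change (fun i => indicator a b (fracR (s i + INR (v i) * t)))
    with (fun i => indicator a b (y i)).
  apply Rabs_le. lra.
Qed.

Theorem lemma4p2 :
  exists c : R, 0 < c /\
  forall (n : nat) (v : nat -> nat) (s : nat -> R),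
    (forall i j : nat, (i < n)%nat -> (j < n)%nat -> v i = v j -> i = j) ->
    (forall i : nat, (i < n)%nat -> 0 <= s i < 1) ->
    forall (t B : R) (M : nat -> R),
      is_lub (bias_set n (fun i => s i + INR (v i) * t)) B ->
      (forall k : nat, is_lub (hadamard_mod_set n v s k) (M k)) ->
      B <= c * (1 + rsum n (fun j => M (S j) / INR (S j))).
Proof.
  exists 75. split; [lra|].
  intros n v s Hv _ t B M [_ HB] HM.
  apply HB. intros x [a [b [Ha [Hab [Hb ->]]]]].
  destruct n as [|n'].
  - simpl. rewrite Rmult_0_l, Rminus_0_r, Rabs_R0. lra.
  - apply interval_bias_bound; auto. lia.
Qed.
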